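(* Let $(b_n)_{n\ge 0}$ and $(p_{2n})_{n\ge 1}$ be sequences of non-negative integers, not all $p_{2n}$ zero, and let $$V(x)=\sum_{n=0}^\infty b_n x^n,\qquad U(x)=\sum_{n=1}^\infty p_{2n}x^n$$ have radii of convergence $x_V$ and $x_U$ respectively, where $0<x_U<x_V\le 1$ and $V(x_V^-):=\lim_{x\to x_V^-}V(x)=\infty$. Write $U(x_U^-):=\lim_{x\to x_U^-}U(x)\in(0,\infty]$. For $w\ge 1$ let $$Z(x,w)=\frac{V(wx)}{1-U(x)V(wx)}=\sum_{n\ge 0} Z_n(w)x^n,$$ let $x_c(w)$ denote the radius of convergence of this power series in $x$, and let $f(w)=-\log x_c(w)$ (the free energy). Define $w_c$ as follows: if $U(x_U^-)=\infty$ or $U(x_U^-)V(x_U)\ge 1$, set $w_c=1$; otherwise ($U(x_U^-)<\infty$ and $U(x_U^-)V(x_U)<1$) let $w_c>1$ be the number defined by $U(x_U^-)V(w_c x_U)=1$. Then $$f(w)=\begin{cases}-\log x_c(w), & w_c\le w<\infty,\\ -\log x_U, & 1<w<w_c,\end{cases}$$ where, for $w_c\le w<\infty$, $x_c(w)$ is the unique positive solution $x\in(0,x_U]$ of $U(x)V(wx)=1$ (with $U(x_U)$ interpreted as $U(x_U^-)$).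
   Context: This is the Poland–Scheraga model of DNA denaturation: $b_n$ counts paths (double-stranded segments) of length $n$, $p_{2n}$ counts marked loops (single-stranded segments) of length $2n$, and $w=e^{-E/kT}\ge 1$ is the Boltzmann factor of the attractive energy per path bond. The free energy is $f(w)=\lim_{n\to\infty}\frac1n\log Z_n(w)=-\log x_c(w)$. *)

From Stdlib Require Import Reals.
From Coquelicot Require Import Coquelicot.
Open Scope R_scope.

Definition conv (a c : nat -> R) (n : nat) : R :=
  sum_f_R0 (fun i => a i * c (n - i)%nat) n.

Fixpoint cpow (a : nat -> R) (k : nat) : nat -> R :=
  match k with
  | O => fun n => match n with O => 1 | _ => 0 end
  | S k' => conv a (cpow a k')
  end.

Definition Vcoef (b : nat -> nat) (n : nat) : R := INR (b n).

(* Coefficients of U(x) = sum_{n>=1} p_{2n} x^n; here p n stands for p_{2n},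
   and the value p 0 is irrelevant (the constant term of U is 0). *)
Definition Ucoef (p : nat -> nat) (n : nat) : R :=
  match n with O => 0 | _ => INR (p n) end.

Definition Vwcoef (b : nat -> nat) (w : R) (n : nat) : R := INR (b n) * w ^ n.

(* Z_n(w): coefficient of x^n in V(wx)/(1 - U(x)V(wx)) = V(wx) sum_k (U(x)V(wx))^k.
   Since U(0) = 0, only the terms k <= n contribute to the coefficient of x^n. *)
Definition Zcoef (b p : nat -> nat) (w : R) (n : nat) : R :=
  sum_f_R0 (fun k => conv (Vwcoef b w) (cpow (conv (Ucoef p) (Vwcoef b w)) k) n) n.

Definition xc (b p : nat -> nat) (w : R) : Rbar := CV_radius (Zcoef b p w).

Definition free_energy (b p : nat -> nat) (w : R) : R := - ln (real (xc b p w)).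

(* U extended to (0, x_U] with U(x_U) := U(x_U^-) = Ulim. *)
Definition Uext (p : nat -> nat) (xU : R) (Ulim : Rbar) (x : R) : Rbar :=
  if Rlt_dec x xU then Finite (PSeries (Ucoef p) x) else Ulim.

Definition is_solution (b p : nat -> nat) (xU xV : R) (Ulim : Rbar) (w x : R) : Prop :=
  0 < x /\ x <= xU /\ w * x < xV /\
  Rbar_mult (Uext p xU Ulim x) (Finite (PSeries (Vcoef b) (w * x))) = Finite 1.

Definition is_wc (b : nat -> nat) (xU xV : R) (Ulim : Rbar) (wc : R) : Prop :=
  (Ulim = p_infty \/ Rbar_le (Finite 1) (Rbar_mult Ulim (Finite (PSeries (Vcoef b) xU)))
     -> wc = 1) /\
  (~ (Ulim = p_infty \/ Rbar_le (Finite 1) (Rbar_mult Ulim (Finite (PSeries (Vcoef b) xU))))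
     -> 1 < wc /\ wc * xU < xV /\
        Rbar_mult Ulim (Finite (PSeries (Vcoef b) (wc * xU))) = Finite 1).

(* Truncating the geometric expansion
   Z(x,w) = V(wx) sum_k (U(x)V(wx))^k at k <= K gives a series whose value at
   t >= 0 is V(wt) sum_{k<=K} q(t)^k, where q(t) = U(t)V(wt) is increasing; since
   U(0) = 0 these truncations agree with Z up to order K.  Hence the Z-series
   converges at t when q(t) < 1, and diverges at any point where q tends to 1 from
   the left, because there it is bounded below by V(wt)(K+1) for every K.
   For w >= w_c, q exceeds 1 near x_U or near the pole x_V/w of V(w.), or reaches 1
   exactly at x_U, and the intermediate value theorem provides the root x_c(w).
   For w < w_c, q < U(x_U^-)V(w_c x_U) = 1 on [0, x_U), while the one-loop terms
   Z_n >= (b_m w^m)^2 p_{2(n-2m)} make Z diverge beyond x_U. *)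

From Stdlib Require Import Reals Lra Lia Arith Classical.
From Coquelicot Require Import Coquelicot.
Open Scope R_scope.

Lemma Rmult_lt_1_compat s t u v :
  0 <= s < u -> 0 <= t <= v -> u * v = 1 -> s * t < 1.
Proof. intros Hs Ht Huv. assert (0 < v) by nra. nra. Qed.

Lemma pow_lt_pow_l s t n : 0 <= s < t -> (1 <= n)%nat -> s ^ n < t ^ n.
Proof.
  intros Hst Hn. induction Hn as [|n Hn IH]; simpl; [lra|].
  assert (0 <= s ^ n) by (apply pow_le; lra). nra.
Qed.

Section FilterLimits.

Context {T : Type} (F : (T -> Prop) -> Prop) {FF : Filter F}.

Lemma filterlim_Rmult (f g : T -> R) (a c : R) :
  filterlim f F (locally a) -> filterlim g F (locally c) ->
  filterlim (fun y => f y * g y) F (locally (a * c)).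
Proof. intros Hf Hg. exact (filterlim_comp_2 f g Rmult Hf Hg (filterlim_mult a c)). Qed.

Lemma filterlim_pow (f : T -> R) (a : R) (k : nat) :
  filterlim f F (locally a) -> filterlim (fun y => f y ^ k) F (locally (a ^ k)).
Proof.
  intros Hf. induction k as [|k IH]; simpl.
  - apply filterlim_const.
  - now apply filterlim_Rmult.
Qed.

Lemma filterlim_sum_f_R0 (g : nat -> T -> R) (c : nat -> R) (K : nat) :
  (forall k, filterlim (g k) F (locally (c k))) ->
  filterlim (fun y => sum_f_R0 (fun k => g k y) K) F (locally (sum_f_R0 c K)).
Proof.
  intros Hg. induction K as [|K IH]; simpl; [apply Hg|].
  exact (filterlim_comp_2 _ _ Rplus IH (Hg _) (filterlim_plus _ _)).
Qed.

Lemma filter_Rmult_gt_1 (f g : T -> R) c :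
  0 < c -> filterlim f F (Rbar_locally p_infty) -> F (fun y => c <= g y) ->
  F (fun y => 1 < f y * g y).
Proof.
  intros Hc Hf Hg.
  assert (Hbig : F (fun y => / c < f y)) by (apply Hf; exists (/ c); auto).
  apply (filter_imp (fun y => / c < f y /\ c <= g y)); [|now apply filter_and].
  intros y [Hfy Hgy].
  assert (0 < / c) by (apply Rinv_0_lt_compat; lra).
  assert (/ c * c = 1) by (field; lra).
  nra.
Qed.

End FilterLimits.

Lemma at_left_between a x : a < x -> at_left x (fun y => a < y < x).
Proof.
  intros Hax. apply filter_and.
  - apply filter_le_within. exact (open_gt a x Hax).
  - unfold at_left, within. apply filter_forall. now intros y Hy.
Qed.

Lemma at_left_witness a x (P : R -> Prop) :
  a < x -> at_left x P -> exists y, a < y < x /\ P y.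
Proof.
  intros Hax HP.
  exact (filter_ex (F := at_left x) _ (filter_and _ _ (at_left_between a x Hax) HP)).
Qed.

Lemma filterlim_Rmult_l_at_left c x :
  0 < c -> filterlim (fun y => c * y) (at_left x) (at_left (c * x)).
Proof.
  intros Hc P [eps HP]. unfold filtermap.
  assert (Heps : 0 < eps / c) by (apply Rdiv_lt_0_compat; [apply cond_pos | lra]).
  exists (mkposreal _ Heps). intros y Hy Hyx. apply HP.
  - change (Rabs (c * y - c * x) < eps). change (Rabs (y - x) < eps / c) in Hy.
    replace (c * y - c * x) with (c * (y - x)) by ring.
    rewrite Rabs_mult, (Rabs_right c) by lra.
    apply Rmult_lt_compat_l with (r := c) in Hy; [|lra].
    now replace (c * (eps / c)) with (pos eps) in Hy by (field; lra).
  - now apply Rmult_lt_compat_l.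
Qed.

Lemma sum_f_R0_ge_term (f : nat -> R) i N :
  (forall n, 0 <= f n) -> (i <= N)%nat -> f i <= sum_f_R0 f N.
Proof.
  intros Hf HiN. induction HiN as [|N HiN IH].
  - destruct i as [|i]; simpl; [lra|]. pose proof (cond_pos_sum f i Hf). lra.
  - simpl. specialize (Hf (S N)). lra.
Qed.

Lemma is_series_ge_sum_f_R0 (s : nat -> R) (l : R) (N : nat) :
  (forall n, 0 <= s n) -> is_series s l -> sum_f_R0 s N <= l.
Proof. intros Hs Hl. apply sum_incr; [apply is_series_Reals|]; assumption. Qed.

Lemma is_series_pos (s : nat -> R) (l : R) (i : nat) :
  (forall n, 0 <= s n) -> 0 < s i -> is_series s l -> 0 < l.
Proof.
  intros Hs Hi Hl.
  pose proof (sum_f_R0_ge_term s i i Hs (le_n i)).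
  pose proof (is_series_ge_sum_f_R0 s l i Hs Hl). lra.
Qed.

Lemma is_series_le_nonneg (s t : nat -> R) (ls lt : R) :
  (forall n, 0 <= s n <= t n) -> is_series s ls -> is_series t lt -> ls <= lt.
Proof.
  intros Hst Hs Ht. rewrite <- (is_series_unique _ _ Hs), <- (is_series_unique _ _ Ht).
  apply Series_le; [assumption | now exists lt].
Qed.

Lemma ex_series_nonneg_bounded (s : nat -> R) M :
  (forall n, 0 <= s n) -> (forall N, sum_f_R0 s N <= M) -> ex_series s.
Proof.
  intros Hs HM. destruct (growing_cv (sum_f_R0 s)) as [l Hl].
  - intro n. simpl. specialize (Hs (S n)). lra.
  - exists M. intros x [n ->]. apply HM.
  - exists l. now apply is_series_Reals.
Qed.

Lemma ex_series_nonneg_le (s t : nat -> R) :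
  (forall n, 0 <= s n <= t n) -> ex_series t -> ex_series s.
Proof.
  intros Hst Ht. apply (ex_series_le s t); [|assumption].
  intro n. change (Rabs (s n) <= t n). rewrite Rabs_pos_eq; apply Hst.
Qed.

Lemma pseries_term_nonneg (a : nat -> R) t n :
  (forall n, 0 <= a n) -> 0 <= t -> 0 <= a n * t ^ n.
Proof. intros Ha Ht. apply Rmult_le_pos; [apply Ha | now apply pow_le]. Qed.

Lemma CV_radius_ge_of_ex_series (a : nat -> R) t :
  (forall n, 0 <= a n) -> 0 <= t -> ex_series (fun n => a n * t ^ n) ->
  Rbar_le t (CV_radius a).
Proof.
  intros Ha Ht Hex. apply (proj1 (Lub_Rbar_correct (CV_disk a))).
  refine (ex_series_ext _ _ _ Hex). intro n.
  symmetry. now apply Rabs_pos_eq, pseries_term_nonneg.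
Qed.

Lemma CV_radius_nonneg_eq (a : nat -> R) x :
  (forall n, 0 <= a n) -> 0 <= x ->
  (forall y, 0 <= y < x -> ex_series (fun n => a n * y ^ n)) ->
  (forall y, x < y -> ~ ex_series (fun n => a n * y ^ n)) ->
  CV_radius a = Finite x.
Proof.
  intros Ha Hx Hin Hout. apply is_lub_Rbar_unique. split.
  - intros y Hy. simpl. destruct (Rle_lt_dec y x) as [Hyx|Hxy]; [assumption|].
    exfalso. apply (Hout y Hxy). refine (ex_series_ext _ _ _ Hy). intro n.
    apply Rabs_pos_eq, pseries_term_nonneg; [assumption | lra].
  - intros B HB. pose proof (HB 0 (CV_disk_0 a)) as HB0.
    destruct B as [B| |]; simpl in *; try easy.
    destruct (Rle_lt_dec x B) as [HxB|HBx]; [assumption|]. exfalso.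
    assert (Hdisk : CV_disk a ((B + x) / 2)).
    { refine (ex_series_ext _ _ _ (Hin ((B + x) / 2) ltac:(lra))). intro n.
      symmetry. apply Rabs_pos_eq, pseries_term_nonneg; [assumption | lra]. }
    specialize (HB _ Hdisk). simpl in HB. lra.
Qed.

Lemma is_series_conv_nonneg (a c : nat -> R) (t t' la lc : R) :
  (forall n, 0 <= a n) -> (forall n, 0 <= c n) -> 0 <= t < t' ->
  ex_series (fun n => a n * t' ^ n) -> ex_series (fun n => c n * t' ^ n) ->
  is_series (fun n => a n * t ^ n) la -> is_series (fun n => c n * t ^ n) lc ->
  is_series (fun n => conv a c n * t ^ n) (la * lc).
Proof.
  intros Ha Hc Ht Ha' Hc' Hla Hlc.
  assert (Hrad : forall e, (forall n, 0 <= e n) -> ex_series (fun n => e n * t' ^ n) ->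
            Rbar_lt (Rabs t) (CV_radius e)).
  { intros e He He'. rewrite Rabs_pos_eq by lra.
    apply Rbar_lt_le_trans with t'; [simpl; lra|].
    apply CV_radius_ge_of_ex_series; [assumption | lra | assumption]. }
  apply is_pseries_R, (is_pseries_mult a c); try apply is_pseries_R; auto.
Qed.

Section NonnegPowerSeries.

Variables (a : nat -> R) (r : R).
Hypothesis a_nonneg : forall n, 0 <= a n.
Hypothesis a_radius : CV_radius a = Finite r.

Lemma is_series_PSeries t : 0 <= t < r -> is_series (fun n => a n * t ^ n) (PSeries a t).
Proof.
  intros Ht. apply is_pseries_R, PSeries_correct, CV_radius_inside.
  rewrite a_radius, Rabs_pos_eq by lra. simpl; lra.
Qed.

Lemma PSeries_nonneg t : 0 <= t < r -> 0 <= PSeries a t.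
Proof.
  intros Ht. pose proof (is_series_ge_sum_f_R0 _ _ O
    (fun n => pseries_term_nonneg a t n a_nonneg (proj1 Ht)) (is_series_PSeries t Ht)).
  pose proof (a_nonneg O). simpl in *. lra.
Qed.

Lemma PSeries_pos t : (exists n, 0 < a n) -> 0 < t < r -> 0 < PSeries a t.
Proof.
  intros [n Hn] Ht. apply (is_series_pos (fun k => a k * t ^ k) _ n).
  - intro k. apply pseries_term_nonneg; [assumption | lra].
  - apply Rmult_lt_0_compat; [assumption | apply pow_lt; lra].
  - apply is_series_PSeries; lra.
Qed.

Lemma PSeries_le_compat s t : 0 <= s <= t -> t < r -> PSeries a s <= PSeries a t.
Proof.
  intros Hst Ht. apply (is_series_le_nonneg (fun n => a n * s ^ n) (fun n => a n * t ^ n)).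
  - intro n. split; [apply pseries_term_nonneg; [assumption | lra]|].
    apply Rmult_le_compat_l; [apply a_nonneg | apply pow_incr; lra].
  - apply is_series_PSeries; lra.
  - apply is_series_PSeries; lra.
Qed.

Lemma PSeries_lt_compat s t :
  (exists n, (1 <= n)%nat /\ 0 < a n) -> 0 <= s < t -> t < r -> PSeries a s < PSeries a t.
Proof.
  intros [n [Hn Han]] Hst Ht.
  assert (Hdiff : 0 < PSeries a t - PSeries a s).
  { apply (is_series_pos (fun k => a k * t ^ k - a k * s ^ k) _ n).
    - intro k. assert (s ^ k <= t ^ k) by (apply pow_incr; lra).
      pose proof (a_nonneg k). nra.
    - pose proof (pow_lt_pow_l s t n Hst Hn). nra.
    - exact (is_series_minus _ _ _ _
               (is_series_PSeries t ltac:(lra)) (is_series_PSeries s ltac:(lra))). }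
  lra.
Qed.

Lemma filterlim_PSeries t : 0 <= t < r -> filterlim (PSeries a) (locally t) (locally (PSeries a t)).
Proof.
  intros Ht. apply continuity_pt_filterlim, PSeries_continuity.
  rewrite a_radius, Rabs_pos_eq by lra. simpl; lra.
Qed.

Lemma PSeries_left_limit_nonneg x L :
  0 < x <= r -> filterlim (PSeries a) (at_left x) (Rbar_locally L) -> Rbar_le 0 L.
Proof.
  intros Hx HL.
  apply (filterlim_le (F := at_left x) (fun _ => 0) (PSeries a));
    [|apply filterlim_const | assumption].
  apply (filter_imp (fun y => 0 < y < x)); [|apply at_left_between; lra].
  intros y Hy. apply PSeries_nonneg. lra.
Qed.

Lemma PSeries_lt_left_limit (x u t : R) :
  (exists n, (1 <= n)%nat /\ 0 < a n) -> x <= r ->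
  filterlim (PSeries a) (at_left x) (locally u) -> 0 <= t < x -> PSeries a t < u.
Proof.
  intros Ha1 Hx Hu Ht. set (m := (t + x) / 2).
  assert (Hlt : PSeries a t < PSeries a m) by (apply PSeries_lt_compat; unfold m; auto; lra).
  assert (Hle : Rbar_le (PSeries a m) u).
  { apply (filterlim_le (F := at_left x) (fun _ => PSeries a m) (PSeries a));
      [|apply filterlim_const | assumption].
    apply (filter_imp (fun y => m < y < x)); [|apply at_left_between; unfold m; lra].
    intros y Hy. apply PSeries_le_compat; unfold m in *; lra. }
  simpl in Hle. lra.
Qed.

End NonnegPowerSeries.

Lemma Rbar_mult_finite_eq_1 L v :
  Rbar_mult L (Finite v) = Finite 1 -> exists l, L = Finite l /\ l * v = 1.
Proof.
  destruct L as [l| |].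
  - intro H. exists l. split; [reflexivity | now injection H].
  - unfold Rbar_mult, Rbar_mult'. destruct (Rle_dec 0 v) as [Hv|Hv];
      [destruct (Rle_lt_or_eq_dec 0 v Hv)|]; intro H;
      [discriminate | injection H; lra | discriminate].
  - unfold Rbar_mult, Rbar_mult'. destruct (Rle_dec 0 v) as [Hv|Hv];
      [destruct (Rle_lt_or_eq_dec 0 v Hv)|]; intro H;
      [discriminate | injection H; lra | discriminate].
Qed.

Lemma conv_nonneg (a c : nat -> R) :
  (forall n, 0 <= a n) -> (forall n, 0 <= c n) -> forall n, 0 <= conv a c n.
Proof. intros Ha Hc n. apply cond_pos_sum. intro i. now apply Rmult_le_pos. Qed.

Lemma cpow_nonneg (a : nat -> R) : (forall n, 0 <= a n) -> forall k n, 0 <= cpow a k n.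
Proof.
  intros Ha k. induction k as [|k IH]; intro n; simpl.
  - destruct n; lra.
  - now apply conv_nonneg.
Qed.

Lemma conv_ge_term (a c : nat -> R) i n :
  (forall n, 0 <= a n) -> (forall n, 0 <= c n) -> (i <= n)%nat ->
  a i * c (n - i)%nat <= conv a c n.
Proof.
  intros Ha Hc Hin. apply (sum_f_R0_ge_term (fun j => a j * c (n - j)%nat)); [|assumption].
  intro j. now apply Rmult_le_pos.
Qed.

Lemma conv_cpow0_r (a c : nat -> R) n : conv c (cpow a 0) n = c n.
Proof.
  unfold conv. destruct n as [|n]; simpl; [ring|].
  rewrite sum_eq_R0, Nat.sub_diag; [ring|].
  intros [|i] Hi; [ring|]. destruct (n - i)%nat eqn:E; [lia | ring].
Qed.

Lemma cpow_low (a : nat -> R) : a O = 0 -> forall k n, (n < k)%nat -> cpow a k n = 0.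
Proof.
  intros Ha0 k. induction k as [|k IH]; intros n Hn; [lia|].
  simpl. unfold conv. apply sum_eq_R0. intros [|i] Hi.
  - rewrite Ha0. ring.
  - rewrite IH by lia. ring.
Qed.

Lemma is_series_cpow0 (a : nat -> R) t : is_series (fun n => cpow a 0 n * t ^ n) 1.
Proof.
  apply is_series_Reals. intros eps Heps. exists O. intros N _.
  replace (sum_f_R0 _ N) with 1; [unfold R_dist; rewrite Rminus_diag, Rabs_R0; lra|].
  induction N as [|N IH]; simpl in *; [ring | rewrite <- IH; ring].
Qed.

Lemma Ucoef_nonneg p n : 0 <= Ucoef p n.
Proof. destruct n; simpl; [lra | apply pos_INR]. Qed.

Lemma Vcoef_nonneg b n : 0 <= Vcoef b n.
Proof. apply pos_INR. Qed.

Lemma Ucoef_pos_of_nonzero p :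
  (exists n, (1 <= n)%nat /\ p n <> 0%nat) -> exists n, (1 <= n)%nat /\ 0 < Ucoef p n.
Proof.
  intros [n [Hn Hp]]. exists n. split; [assumption|].
  destruct n as [|n]; [lia|]. apply lt_0_INR. lia.
Qed.

Lemma Vcoef_pos_of_unbounded b xV :
  filterlim (PSeries (Vcoef b)) (at_left xV) (Rbar_locally p_infty) -> exists m, 0 < Vcoef b m.
Proof.
  intros HVinf. apply NNPP. intros Hzero.
  assert (HV0 : forall t, PSeries (Vcoef b) t = 0).
  { intro t. rewrite <- (PSeries_const_0 t). apply PSeries_ext. intro n.
    destruct (Vcoef_nonneg b n) as [Hpos|Hz]; [exfalso; eauto | now rewrite <- Hz]. }
  assert (Hev : at_left xV (fun y => 0 < PSeries (Vcoef b) y)) by (apply HVinf; now exists 0).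
  destruct (at_left_witness (xV - 1) xV _ ltac:(lra) Hev) as [y [_ Hy]].
  rewrite HV0 in Hy. lra.
Qed.

Section Model.

Variables (b p : nat -> nat) (w xU xV : R).
Hypothesis V_radius : CV_radius (Vcoef b) = Finite xV.
Hypothesis U_radius : CV_radius (Ucoef p) = Finite xU.
Hypothesis w_pos : 0 < w.
Hypothesis U_nontrivial : exists n, (1 <= n)%nat /\ 0 < Ucoef p n.
Hypothesis V_nontrivial : exists m, 0 < Vcoef b m.

Local Notation U := (PSeries (Ucoef p)).
Local Notation V := (PSeries (Vcoef b)).

Definition UVcoef : nat -> R := conv (Ucoef p) (Vwcoef b w).
Definition Zterm (k : nat) : nat -> R := conv (Vwcoef b w) (cpow UVcoef k).
Definition Zpartial (K n : nat) : R := sum_f_R0 (fun k => Zterm k n) K.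
Definition UV (t : R) : R := U t * V (w * t).
Definition in_disc (t : R) : Prop := 0 <= t < xU /\ w * t < xV.

Lemma Vwcoef_nonneg n : 0 <= Vwcoef b w n.
Proof. apply Rmult_le_pos; [apply pos_INR | apply pow_le; lra]. Qed.

Lemma UVcoef_nonneg n : 0 <= UVcoef n.
Proof. apply conv_nonneg; [apply Ucoef_nonneg | apply Vwcoef_nonneg]. Qed.

Lemma Zterm_nonneg k n : 0 <= Zterm k n.
Proof. apply conv_nonneg; [apply Vwcoef_nonneg | apply cpow_nonneg, UVcoef_nonneg]. Qed.

Lemma Zpartial_nonneg K n : 0 <= Zpartial K n.
Proof. apply cond_pos_sum. intro k. apply Zterm_nonneg. Qed.

Lemma Zpartial_eq_Zcoef K n : (n <= K)%nat -> Zpartial K n = Zcoef b p w n.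
Proof.
  assert (HUV0 : UVcoef O = 0) by (unfold UVcoef, conv; simpl; ring).
  intros HnK. induction HnK as [|K HnK IH]; [reflexivity|].
  unfold Zpartial in *. simpl. rewrite IH.
  unfold Zterm, conv. rewrite sum_eq_R0; [ring|].
  intros i Hi. rewrite cpow_low by (assumption || lia). ring.
Qed.

Lemma Zcoef_nonneg n : 0 <= Zcoef b p w n.
Proof. rewrite <- (Zpartial_eq_Zcoef n n) by lia. apply Zpartial_nonneg. Qed.

Lemma Zpartial_le_Zcoef K n : Zpartial K n <= Zcoef b p w n.
Proof.
  destruct (le_lt_dec n K) as [HnK|HKn]; [rewrite Zpartial_eq_Zcoef by assumption; lra|].
  rewrite <- (Zpartial_eq_Zcoef n n) by lia.
  unfold Zpartial. rewrite (tech2 _ K n HKn).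
  assert (0 <= sum_f_R0 (fun i => Zterm (S K + i) n) (n - S K))
    by (apply cond_pos_sum; intro; apply Zterm_nonneg).
  lra.
Qed.

Lemma Zcoef_ge_loop m n :
  (m + m <= n)%nat -> Vwcoef b w m * Vwcoef b w m * Ucoef p (n - m - m) <= Zcoef b p w n.
Proof.
  intros Hn.
  assert (HUV : Ucoef p (n - m - m) * Vwcoef b w m <= UVcoef (n - m)).
  { pose proof (conv_ge_term _ _ (n - m - m) (n - m) (Ucoef_nonneg p) Vwcoef_nonneg
      ltac:(lia)) as H.
    now replace (n - m - (n - m - m))%nat with m in H by lia. }
  assert (Hterm : Vwcoef b w m * UVcoef (n - m) <= Zterm 1 n).
  { pose proof (conv_ge_term _ _ m n Vwcoef_nonneg (cpow_nonneg _ UVcoef_nonneg 1)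
      ltac:(lia)) as H.
    change (cpow UVcoef 1 (n - m)) with (conv UVcoef (cpow UVcoef 0) (n - m)) in H.
    now rewrite conv_cpow0_r in H. }
  assert (Hpartial : Zterm 1 n <= Zpartial 1 n).
  { unfold Zpartial. simpl. pose proof (Zterm_nonneg 0 n). lra. }
  pose proof (Zpartial_le_Zcoef 1 n).
  pose proof (Vwcoef_nonneg m).
  nra.
Qed.

Lemma in_disc_larger t : in_disc t -> exists t', t < t' /\ in_disc t'.
Proof.
  intros [Ht Hwt]. set (s := Rmin xU (xV / w)).
  assert (Hts : t < s).
  { apply Rmin_glb_lt; [lra|]. apply Rmult_lt_reg_l with w; [lra|].
    now replace (w * (xV / w)) with xV by (field; lra). }
  assert (Hws : w * s <= xV).
  { apply Rle_trans with (w * (xV / w)); [|right; field; lra].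
    apply Rmult_le_compat_l; [lra | apply Rmin_r]. }
  assert (HsU : s <= xU) by apply Rmin_l.
  exists ((t + s) / 2). unfold in_disc. repeat split; lra.
Qed.

Lemma is_series_U t : in_disc t -> is_series (fun n => Ucoef p n * t ^ n) (U t).
Proof. intros [Ht _]. now apply (is_series_PSeries _ xU). Qed.

Lemma is_series_Vw t : in_disc t -> is_series (fun n => Vwcoef b w n * t ^ n) (V (w * t)).
Proof.
  intros [Ht Hwt].
  refine (is_series_ext _ _ _ _ (is_series_PSeries _ xV V_radius (w * t) ltac:(nra))).
  intro n. unfold Vwcoef, Vcoef. rewrite Rpow_mult_distr. symmetry. apply Rmult_assoc.
Qed.

Lemma is_series_UV t : in_disc t -> is_series (fun n => UVcoef n * t ^ n) (UV t).
Proof.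
  intros Ht. destruct (in_disc_larger t Ht) as [t' [Htt' Ht']].
  apply (is_series_conv_nonneg _ _ t t').
  - apply Ucoef_nonneg.
  - apply Vwcoef_nonneg.
  - split; [apply Ht | assumption].
  - eexists. now apply is_series_U.
  - eexists. now apply is_series_Vw.
  - now apply is_series_U.
  - now apply is_series_Vw.
Qed.

Lemma is_series_cpow k t : in_disc t -> is_series (fun n => cpow UVcoef k n * t ^ n) (UV t ^ k).
Proof.
  revert t. induction k as [|k IH]; intros t Ht; [apply is_series_cpow0|].
  destruct (in_disc_larger t Ht) as [t' [Htt' Ht']].
  apply (is_series_conv_nonneg _ _ t t').
  - apply UVcoef_nonneg.
  - apply cpow_nonneg, UVcoef_nonneg.
  - split; [apply Ht | assumption].
  - eexists. now apply is_series_UV.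
  - eexists. now apply IH.
  - now apply is_series_UV.
  - now apply IH.
Qed.

Lemma is_series_Zterm k t :
  in_disc t -> is_series (fun n => Zterm k n * t ^ n) (V (w * t) * UV t ^ k).
Proof.
  intros Ht. destruct (in_disc_larger t Ht) as [t' [Htt' Ht']].
  apply (is_series_conv_nonneg _ _ t t').
  - apply Vwcoef_nonneg.
  - apply cpow_nonneg, UVcoef_nonneg.
  - split; [apply Ht | assumption].
  - eexists. now apply is_series_Vw.
  - eexists. now apply is_series_cpow.
  - now apply is_series_Vw.
  - now apply is_series_cpow.
Qed.

Lemma is_series_Zpartial K t :
  in_disc t ->
  is_series (fun n => Zpartial K n * t ^ n) (V (w * t) * sum_f_R0 (fun k => UV t ^ k) K).
Proof.
  intros Ht. induction K as [|K IH]; [exact (is_series_Zterm 0 t Ht)|].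
  pose proof (is_series_plus _ _ _ _ IH (is_series_Zterm (S K) t Ht)) as Hsum.
  simpl sum_f_R0. rewrite Rmult_plus_distr_l.
  refine (is_series_ext _ _ _ _ Hsum). intro n.
  unfold Zpartial. simpl sum_f_R0. apply eq_sym, Rmult_plus_distr_r.
Qed.

Lemma ex_series_Zcoef_of_UV_lt_1 t :
  in_disc t -> UV t < 1 -> ex_series (fun n => Zcoef b p w n * t ^ n).
Proof.
  intros Ht HUV.
  assert (HU0 : 0 <= U t) by (apply (PSeries_nonneg _ xU); auto using Ucoef_nonneg; apply Ht).
  assert (HV0 : 0 <= V (w * t)).
  { apply (PSeries_nonneg _ xV); auto using Vcoef_nonneg. destruct Ht. nra. }
  assert (HUV0 : 0 <= UV t) by (unfold UV; nra).
  apply (ex_series_nonneg_bounded _ (V (w * t) / (1 - UV t))).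
  - intro n. apply pseries_term_nonneg; [apply Zcoef_nonneg | apply Ht].
  - intro N. rewrite (sum_eq _ (fun n => Zpartial N n * t ^ n))
      by (intros n Hn; now rewrite Zpartial_eq_Zcoef).
    apply Rle_trans with (V (w * t) * sum_f_R0 (fun k => UV t ^ k) N).
    + apply is_series_ge_sum_f_R0; [|now apply is_series_Zpartial].
      intro n. apply pseries_term_nonneg; [intro; apply Zpartial_nonneg | apply Ht].
    + rewrite tech3 by lra. unfold Rdiv. apply Rmult_le_compat_l; [assumption|].
      assert (0 <= UV t ^ S N) by (apply pow_le; lra).
      assert (0 < / (1 - UV t)) by (apply Rinv_0_lt_compat; lra).
      nra.
Qed.

Lemma xU_nonneg : 0 <= xU.
Proof. pose proof (CV_radius_ge_0 (Ucoef p)) as H. now rewrite U_radius in H. Qed.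

Lemma filterlim_Vw t :
  0 <= t -> w * t < xV -> filterlim (fun y => V (w * y)) (locally t) (locally (V (w * t))).
Proof.
  intros Ht Hwt. apply (filterlim_comp _ _ _ (fun y => w * y) V _ (locally (w * t))).
  - exact (continuous_mult (fun _ => w) (fun y => y) t (continuous_const w t) (continuous_id t)).
  - apply (filterlim_PSeries _ xV); [exact V_radius | nra].
Qed.

Lemma filterlim_Vw_at_left x :
  0 <= x -> w * x < xV -> filterlim (fun y => V (w * y)) (at_left x) (locally (V (w * x))).
Proof.
  intros Hx Hwx. eapply filterlim_filter_le_1; [apply filter_le_within | now apply filterlim_Vw].
Qed.

Lemma filterlim_UV_at_left (x u : R) :
  0 <= x -> w * x < xV -> filterlim U (at_left x) (locally u) ->
  filterlim UV (at_left x) (locally (u * V (w * x))).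
Proof.
  intros Hx Hwx Hu.
  apply (filterlim_Rmult (at_left x)); [exact Hu | now apply filterlim_Vw_at_left].
Qed.

Lemma Zcoef_diverges_at (x u : R) :
  0 < x <= xU -> w * x < xV -> filterlim U (at_left x) (locally u) -> u * V (w * x) = 1 ->
  ~ ex_series (fun n => Zcoef b p w n * x ^ n).
Proof.
  intros Hx Hwx Hu Huv [S HS]. change R in S.
  assert (HVpos : 0 < V (w * x)) by (apply (PSeries_pos _ xV); auto using Vcoef_nonneg; nra).
  assert (Hbound : forall K, V (w * x) * (INR K + 1) <= S).
  { intro K.
    assert (Hlim : filterlim (fun y => V (w * y) * sum_f_R0 (fun k => UV y ^ k) K) (at_left x)
                     (locally (V (w * x) * (INR K + 1)))).
    { replace (INR K + 1) with (sum_f_R0 (fun k => (u * V (w * x)) ^ k) K).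
      2: { rewrite Huv, (sum_eq _ (fun _ => 1)) by (intros; apply pow1).
           rewrite sum_cte, S_INR. ring. }
      apply (filterlim_Rmult (at_left x)); [apply filterlim_Vw_at_left; lra|].
      apply (filterlim_sum_f_R0 (at_left x) (fun k y => UV y ^ k)). intro k.
      apply (filterlim_pow (at_left x)), filterlim_UV_at_left; [lra | assumption | assumption]. }
    enough (Hle : Rbar_le (V (w * x) * (INR K + 1)) S) by exact Hle.
    apply (filterlim_le (F := at_left x) (fun y => V (w * y) * sum_f_R0 (fun k => UV y ^ k) K)
      (fun _ => S)); [|exact Hlim | apply filterlim_const].
    apply (filter_imp (fun y => 0 < y < x)); [|apply at_left_between; lra].
    intros y Hy. assert (Hdisc : in_disc y) by (split; [lra | nra]).
    apply (is_series_le_nonneg (fun n => Zpartial K n * y ^ n) (fun n => Zcoef b p w n * x ^ n));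
      [|now apply is_series_Zpartial | exact HS].
    intro n. split; [apply pseries_term_nonneg; [apply Zpartial_nonneg | lra]|].
    apply Rmult_le_compat; [apply Zpartial_nonneg | apply pow_le; lra |
                            apply Zpartial_le_Zcoef | apply pow_incr; lra]. }
  destruct (INR_unbounded (S / V (w * x))) as [K HK].
  specialize (Hbound K).
  apply (Rmult_lt_compat_l (V (w * x))) in HK; [|lra].
  replace (V (w * x) * (S / V (w * x))) with S in HK by (field; lra).
  lra.
Qed.

Lemma Zcoef_diverges_beyond_xU r : xU < r -> ~ ex_series (fun n => Zcoef b p w n * r ^ n).
Proof.
  intros Hr HZ. destruct V_nontrivial as [m Hm].
  set (c := Vwcoef b w m).
  assert (Hc : 0 < c) by (apply Rmult_lt_0_compat; [exact Hm | apply pow_lt; lra]).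
  assert (Hr0 : 0 < r) by (pose proof xU_nonneg; lra).
  set (D := c * c * r ^ (m + m)).
  assert (HD : 0 < D) by (apply Rmult_lt_0_compat; [nra | apply pow_lt; lra]).
  assert (HUr : ex_series (fun k => Ucoef p k * r ^ k)).
  { apply (ex_series_nonneg_le _ (fun k => / D * (Zcoef b p w (m + m + k) * r ^ (m + m + k)))).
    - intro k. split; [apply pseries_term_nonneg; [apply Ucoef_nonneg | lra]|].
      pose proof (Zcoef_ge_loop m (m + m + k) ltac:(lia)) as HZk.
      replace (m + m + k - m - m)%nat with k in HZk by lia. fold c in HZk.
      apply Rmult_le_reg_l with D; [exact HD|].
      rewrite <- (Rmult_assoc D (/ D)), Rinv_r, Rmult_1_l by lra.
      rewrite pow_add. unfold D.
      replace (c * c * r ^ (m + m) * (Ucoef p k * r ^ k))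
        with (c * c * Ucoef p k * (r ^ (m + m) * r ^ k)) by ring.
      apply Rmult_le_compat_r; [apply Rmult_le_pos; apply pow_le; lra | exact HZk].
    - exact (ex_series_scal (/ D) _ (proj1 (ex_series_incr_n _ (m + m)) HZ)). }
  pose proof (CV_radius_ge_of_ex_series _ r (Ucoef_nonneg p) ltac:(lra) HUr) as Hle.
  rewrite U_radius in Hle. simpl in Hle. lra.
Qed.

Lemma ex_series_Zcoef_below (x u v : R) :
  x <= xU -> w * x <= xV -> filterlim U (at_left x) (locally u) -> u * v = 1 ->
  (forall y, 0 <= y < x -> V (w * y) <= v) ->
  forall y, 0 <= y < x -> ex_series (fun n => Zcoef b p w n * y ^ n).
Proof.
  intros HxU Hwx Hu Huv Hv y Hy.
  assert (Hwy : w * y < xV) by nra.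
  apply ex_series_Zcoef_of_UV_lt_1; [split; [lra | assumption]|].
  apply (Rmult_lt_1_compat _ _ u v); [split | split | exact Huv].
  - apply (PSeries_nonneg _ xU); [apply Ucoef_nonneg | exact U_radius | lra].
  - apply (PSeries_lt_left_limit _ xU (Ucoef_nonneg p) U_radius x); auto.
  - apply (PSeries_nonneg _ xV); [apply Vcoef_nonneg | exact V_radius | nra].
  - now apply Hv.
Qed.

Lemma xc_eq_of_left_limit (x u : R) :
  0 < x <= xU -> w * x < xV -> filterlim U (at_left x) (locally u) -> u * V (w * x) = 1 ->
  xc b p w = Finite x.
Proof.
  intros Hx Hwx Hu Huv. apply CV_radius_nonneg_eq; [apply Zcoef_nonneg | lra | |].
  - apply (ex_series_Zcoef_below x u (V (w * x))); try lra; [exact Hu|].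
    intros y Hy. apply (PSeries_le_compat _ xV); [apply Vcoef_nonneg | exact V_radius | nra | lra].
  - intros r Hr Hex. apply (Zcoef_diverges_at x u Hx Hwx Hu Huv).
    apply (ex_series_nonneg_le _ _ (fun n => conj
      (pseries_term_nonneg _ x n Zcoef_nonneg ltac:(lra))
      (Rmult_le_compat_l _ _ _ (Zcoef_nonneg n) (pow_incr x r n ltac:(lra)))) Hex).
Qed.

Lemma xc_eq_xU_of_subcritical (wc l : R) :
  w < wc -> wc * xU < xV -> filterlim U (at_left xU) (locally l) -> l * V (wc * xU) = 1 ->
  xc b p w = Finite xU.
Proof.
  intros Hwwc Hwc Hl Hlv. pose proof xU_nonneg.
  apply CV_radius_nonneg_eq; [apply Zcoef_nonneg | lra | |].
  - apply (ex_series_Zcoef_below xU l (V (wc * xU))); try (lra || nra); [exact Hl|].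
    intros y Hy. apply (PSeries_le_compat _ xV); [apply Vcoef_nonneg | exact V_radius | nra | lra].
  - exact Zcoef_diverges_beyond_xU.
Qed.

Lemma solution_left_limit Ulim x :
  filterlim U (at_left xU) (Rbar_locally Ulim) -> is_solution b p xU xV Ulim w x ->
  exists u : R, filterlim U (at_left x) (locally u) /\ u * V (w * x) = 1.
Proof.
  intros HUl (Hx0 & HxU & Hwx & Heq). unfold Uext in Heq.
  destruct (Rlt_dec x xU) as [Hlt|Hge].
  - exists (U x). split.
    + eapply filterlim_filter_le_1; [apply filter_le_within|].
      apply (filterlim_PSeries _ xU); [exact U_radius | lra].
    + simpl in Heq. now injection Heq.
  - destruct (Rbar_mult_finite_eq_1 _ _ Heq) as [l [-> Hl]].
    assert (x = xU) by lra. subst x. now exists l.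
Qed.

Lemma xc_eq_of_solution Ulim x :
  filterlim U (at_left xU) (Rbar_locally Ulim) -> is_solution b p xU xV Ulim w x ->
  xc b p w = Finite x.
Proof.
  intros HUl Hsol. destruct (solution_left_limit Ulim x HUl Hsol) as [u [Hu Huv]].
  destruct Hsol as (Hx0 & HxU & Hwx & _).
  now apply (xc_eq_of_left_limit x u).
Qed.

Lemma continuity_pt_UV t : 0 <= t < xU -> w * t < xV -> continuity_pt UV t.
Proof.
  intros Ht Hwt. apply continuity_pt_filterlim, (filterlim_Rmult (locally t)).
  - apply (filterlim_PSeries _ xU); [exact U_radius | lra].
  - apply filterlim_Vw; lra.
Qed.

Lemma exists_UV_eq_1 y0 :
  0 < y0 -> in_disc y0 -> 1 < UV y0 -> exists x, 0 < x < y0 /\ UV x = 1.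
Proof.
  intros Hy0 [Hy0U Hwy0] HUV.
  assert (HUV0 : UV 0 = 0) by (unfold UV; rewrite PSeries_0; simpl; ring).
  destruct (IVT_Rbar_incr UV 0 y0 (UV 0) (UV y0) 1) as [x (Hx0 & Hxy0 & Hx)].
  - apply is_lim_continuity, continuity_pt_UV; nra.
  - apply is_lim_continuity, continuity_pt_UV; lra.
  - intros t Ht0 Hty0. simpl in Ht0, Hty0. apply continuity_pt_UV; nra.
  - simpl. lra.
  - rewrite HUV0. simpl. lra.
  - exists x. simpl in Hx0, Hxy0. auto.
Qed.

Lemma exists_solution_near m Ulim :
  0 < m <= xU -> w * m <= xV -> at_left m (fun y => 1 < UV y) ->
  exists x, is_solution b p xU xV Ulim w x.
Proof.
  intros Hm Hwm Hev.
  destruct (at_left_witness 0 m _ (proj1 Hm) Hev) as [y0 [Hy0 HUVy0]].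
  assert (Hdisc : in_disc y0) by (split; [lra | nra]).
  destruct (exists_UV_eq_1 y0 (proj1 Hy0) Hdisc HUVy0) as [x [Hx HUVx]].
  exists x. unfold is_solution, Uext. destruct (Rlt_dec x xU); [|lra].
  repeat split; try lra; [nra|]. simpl. now rewrite <- HUVx.
Qed.

Lemma UV_gt_1_near_pole :
  0 < xV -> xV <= w * xU -> filterlim V (at_left xV) (Rbar_locally p_infty) ->
  at_left (xV / w) (fun y => 1 < UV y).
Proof.
  intros HxV HwxU HVinf. set (m := xV / w).
  assert (Hwm : w * m = xV) by (unfold m; field; lra).
  assert (Hm : 0 < m <= xU) by (split; nra).
  assert (HVw : filterlim (fun y => V (w * y)) (at_left m) (Rbar_locally p_infty)).
  { rewrite <- Hwm in HVinf.
    exact (filterlim_comp _ _ _ _ _ _ _ _ (filterlim_Rmult_l_at_left w m w_pos) HVinf). }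
  assert (Hc : 0 < U (m / 2)).
  { destruct U_nontrivial as [n [_ Hn]].
    apply (PSeries_pos _ xU); [apply Ucoef_nonneg | exact U_radius | now exists n | lra]. }
  apply (filter_imp (fun y => 1 < V (w * y) * U y)); [intros y Hy; unfold UV; lra|].
  apply (filter_Rmult_gt_1 _ _ _ _ Hc HVw).
  apply (filter_imp (fun y => m / 2 < y < m)); [|apply at_left_between; lra].
  intros y Hy. apply (PSeries_le_compat _ xU); [apply Ucoef_nonneg | exact U_radius | lra | lra].
Qed.

Lemma UV_gt_1_near_xU_infinite :
  0 < xU -> w * xU < xV -> filterlim U (at_left xU) (Rbar_locally p_infty) ->
  at_left xU (fun y => 1 < UV y).
Proof.
  intros HxU Hwx HUinf.
  assert (Hc : 0 < V (w * (xU / 2))).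
  { apply (PSeries_pos _ xV); [apply Vcoef_nonneg | exact V_radius | exact V_nontrivial | nra]. }
  apply (filter_Rmult_gt_1 _ _ _ _ Hc HUinf).
  apply (filter_imp (fun y => xU / 2 < y < xU)); [|apply at_left_between; lra].
  intros y Hy. apply (PSeries_le_compat _ xV); [apply Vcoef_nonneg | exact V_radius | nra | nra].
Qed.

Lemma UV_gt_1_near_xU_finite (l : R) :
  w * xU < xV -> filterlim U (at_left xU) (locally l) -> 1 < l * V (w * xU) ->
  at_left xU (fun y => 1 < UV y).
Proof.
  intros Hwx Hl Hgt. apply (filterlim_UV_at_left xU l xU_nonneg Hwx Hl).
  exact (open_gt 1 _ Hgt).
Qed.

Lemma one_le_Ulim_V (wc l : R) :
  1 <= w -> wc <= w -> 0 < xU -> w * xU < xV ->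
  filterlim U (at_left xU) (locally l) -> is_wc b xU xV (Finite l) wc -> 1 <= l * V (w * xU).
Proof.
  intros Hw1 Hwc HxU Hwx Hl [Hcrit Hsub].
  assert (Hl0 : 0 <= l) by exact (PSeries_left_limit_nonneg _ xU (Ucoef_nonneg p) U_radius xU l
                                     ltac:(lra) Hl).
  destruct (classic (Finite l = p_infty \/ Rbar_le 1 (Rbar_mult (Finite l) (Finite (V xU)))))
    as [[C|C]|C]; [discriminate | |].
  - assert (V xU <= V (w * xU)) by (apply (PSeries_le_compat _ xV); auto using Vcoef_nonneg; nra).
    simpl in C. nra.
  - destruct (Hsub C) as (Hwc1 & HwcxU & Heq). simpl in Heq. injection Heq as Heq.
    assert (V (wc * xU) <= V (w * xU))
      by (apply (PSeries_le_compat _ xV); auto using Vcoef_nonneg; nra).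
    nra.
Qed.

Lemma exists_solution Ulim wc :
  1 <= w -> wc <= w -> 0 < xU -> xU < xV ->
  filterlim V (at_left xV) (Rbar_locally p_infty) ->
  filterlim U (at_left xU) (Rbar_locally Ulim) -> is_wc b xU xV Ulim wc ->
  exists x, is_solution b p xU xV Ulim w x.
Proof.
  intros Hw1 Hwc HxU HxUV HVinf HUl Hwcdef.
  destruct (Rlt_le_dec (w * xU) xV) as [Hwx|Hwx].
  - destruct Ulim as [l| |].
    + destruct (Rle_lt_or_eq_dec _ _ (one_le_Ulim_V wc l Hw1 Hwc HxU Hwx HUl Hwcdef))
        as [Hgt|Heq].
      * apply (exists_solution_near xU); [lra | lra | now apply (UV_gt_1_near_xU_finite l)].
      * exists xU. unfold is_solution, Uext. destruct (Rlt_dec xU xU); [lra|].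
        repeat split; try lra. simpl. now rewrite <- Heq.
    + apply (exists_solution_near xU); [lra | lra | now apply UV_gt_1_near_xU_infinite].
    + destruct (PSeries_left_limit_nonneg _ xU (Ucoef_nonneg p) U_radius xU _ ltac:(lra) HUl).
  - apply (exists_solution_near (xV / w)).
    + split; [apply Rdiv_lt_0_compat; lra|].
      apply Rmult_le_reg_l with w; [lra|]. replace (w * (xV / w)) with xV by (field; lra). lra.
    + right. field. lra.
    + apply UV_gt_1_near_pole; [lra | lra | exact HVinf].
Qed.

End Model.

Theorem theorem1 (b p : nat -> nat) (xU xV : R) (Ulim : Rbar) (wc : R) :
  (exists n : nat, (1 <= n)%nat /\ p n <> 0%nat) ->
  CV_radius (Vcoef b) = Finite xV ->
  CV_radius (Ucoef p) = Finite xU ->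
  0 < xU -> xU < xV -> xV <= 1 ->
  filterlim (PSeries (Vcoef b)) (at_left xV) (Rbar_locally p_infty) ->
  filterlim (PSeries (Ucoef p)) (at_left xU) (Rbar_locally Ulim) ->
  is_wc b xU xV Ulim wc ->
  (forall w : R, 1 <= w -> wc <= w ->
     exists x : R,
       is_solution b p xU xV Ulim w x /\
       (forall y : R, is_solution b p xU xV Ulim w y -> y = x) /\
       xc b p w = Finite x /\ free_energy b p w = - ln x) /\
  (forall w : R, 1 < w -> w < wc ->
       xc b p w = Finite xU /\ free_energy b p w = - ln xU).
Proof.
  intros Hp HV HU HxU HxUV _ HVinf HUl Hwc.
  pose proof (Ucoef_pos_of_nonzero p Hp) as HUpos.
  pose proof (Vcoef_pos_of_unbounded b xV HVinf) as HVpos.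
  split.
  - intros w Hw1 Hwcw.
    assert (Hxc : forall x, is_solution b p xU xV Ulim w x -> xc b p w = Finite x)
      by (intros x; apply (xc_eq_of_solution b p w xU xV); auto; lra).
    destruct (exists_solution b p w xU xV HV HU ltac:(lra) HUpos HVpos Ulim wc
                Hw1 Hwcw HxU HxUV HVinf HUl Hwc) as [x Hx].
    exists x. split; [exact Hx|].
    split; [|split; [exact (Hxc x Hx) | unfold free_energy; now rewrite (Hxc x Hx)]].
    intros y Hy. pose proof (Hxc y Hy) as Hxy. rewrite (Hxc x Hx) in Hxy. now injection Hxy.
  - intros w Hw1 Hwwc. destruct Hwc as [Hcrit Hsub].
    destruct (classic (Ulim = p_infty \/
                       Rbar_le 1 (Rbar_mult Ulim (Finite (PSeries (Vcoef b) xU))))) as [C|C].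
    + specialize (Hcrit C). lra.
    + destruct (Hsub C) as (Hwc1 & HwcxU & Heq).
      destruct (Rbar_mult_finite_eq_1 _ _ Heq) as [l [-> Hl]].
      assert (Hxc : xc b p w = Finite xU)
        by (apply (xc_eq_xU_of_subcritical b p w xU xV HV HU ltac:(lra) HUpos HVpos wc l); auto).
      split; [exact Hxc | unfold free_energy; now rewrite Hxc].
Qed.
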